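(* Under the setting and quadratic assumption described in the context, the replacement of an agent, denoted $R$, results in $$\mathbb{E}\left[\Delta f_t \mid R\right] \leq \frac{3n^2-3n+1}{2n^2}\left(\beta-\alpha\right).$$
   Context: A fixed set of $n$ agents on a complete graph solves $\min_{x\in S_n} f^t(x)=\sum_{i=1}^n f_i^t(x_i)$, where $S_n=\{x\in\mathbb{R}_{\ge 0}^n : \mathds{1}^\top x = n\}$ (every agent has demand $d_i^t=1$). Each local cost $f_i^t:\mathbb{R}_{\ge0}\to\mathbb{R}_{\ge0}$ is one-dimensional, continuously differentiable, $\alpha$-strongly convex, $\beta$-smooth, with $\arg\min_{x\ge 0} f_i^t(x)=0$ and $f_i^t(0)=0$; moreover every local cost (including that of any joining agent) is quadratic, $f_i(x_i)=\phi_i x_i^2$ with $\phi_i\in[\alpha/2,\beta/2]$. The estimates $x^t\in S_n$ evolve by events: either an update (a pairwise Random Coordinate Descent step between agents $i,j$: $x_i^+=x_i-\frac1\beta(f_i'(x_i)-f_j'(x_j))$, $x_j^+=x_j-\frac1\beta(f_j'(x_j)-f_i'(x_i))$) or a replacement $R$, i.e. simultaneous departure and arrival. At a departure, a leaving agent $\ell$ chosen uniformly among the $n$ agents sends its estimate $x_\ell$ to all others, which update $x_i^+=(1-\frac1n)x_i+\frac1n x_\ell$; at an arrival, the joining agent initializes its estimate to $1$. Here $\Delta f_t := f^{t+1}(x^{t+1})-f^t(x^t)$ is the one-step variation of the total cost evaluated at the estimates. *)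

From mathcomp Require Import all_boot all_order all_algebra.
Set Implicit Arguments. Unset Strict Implicit. Unset Printing Implicit Defensive.
Import Order.TTheory GRing.Theory Num.Theory.
Local Open Scope ring_scope.

(* Total cost sum_i phi_i x_i^2 of quadratic local costs f_i(x) = phi_i x^2. *)
Definition total_cost (R : realFieldType) (n : nat) (phi x : 'I_n -> R) : R :=
  \sum_(i < n) phi i * x i ^+ 2.

Definition in_simplex (R : realFieldType) (n : nat) (x : 'I_n -> R) : Prop :=
  (forall i, 0 <= x i) /\ \sum_(i < n) x i = n%:R.

(* Estimates after replacement R where agent l leaves (its slot is taken by the
   joining agent, initialized to 1); the others do x_i <- (1-1/n) x_i + x_l / n. *)
Definition replace_est (R : realFieldType) (n : nat) (x : 'I_n -> R) (l : 'I_n)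
  : 'I_n -> R :=
  fun i => if i == l then 1 else (1 - n%:R^-1) * x i + n%:R^-1 * x l.

Definition replace_coef (R : realFieldType) (n : nat) (phi psi : 'I_n -> R)
  (l : 'I_n) : 'I_n -> R :=
  fun i => if i == l then psi l else phi i.

(* E[Delta f_t | R], the leaving agent l being uniform among the n agents. *)
Definition expected_delta_replace (R : realFieldType) (n : nat)
  (phi psi x : 'I_n -> R) : R :=
  n%:R^-1 * \sum_(l < n)
    (total_cost (replace_coef phi psi l) (replace_est x l) - total_cost phi x).

From mathcomp Require Import all_boot all_order all_algebra.
From mathcomp Require Import ring lra.
Import Order.TTheory GRing.Theory Num.Theory.
Set Implicit Arguments.
Unset Strict Implicit.
Local Open Scope ring_scope.

(* Averaging over the leaving agent l gives
   n E[Delta f | R] = sum_l psi_l + sum_i phi_i C_i  with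
   C_i = sum_(l <> i) ((1 - 1/n) x_i + x_l / n)^2 - n x_i^2.
   On the simplex C_i = G_i - c x_i^2, where c = 3 - 3/n + 1/n^2 and G_i >= 0,
   so phi_i C_i <= beta/2 G_i - alpha/2 c x_i^2.  Summing, the bound is affine and
   nonincreasing in Q = sum_i x_i^2, and Q >= n on the simplex; at Q = n it
   equals (beta - alpha) c / 2, which is the claimed constant. *)

Lemma mulrB_le_bounds (R : numDomainType) (lo hi p u v : R) :
  lo <= p <= hi -> 0 <= u -> 0 <= v -> p * (u - v) <= hi * u - lo * v.
Proof.
by move=> /andP[lo_p p_hi] u_ge0 v_ge0; rewrite mulrBr lerB // ler_wpM2r.
Qed.

Section Replacement.

Variables (R : realFieldType) (n : nat).
Implicit Types (phi psi x : 'I_n -> R) (i l : 'I_n).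

Lemma sum_sqr_ge_card x : \sum_(i < n) x i = n%:R -> n%:R <= \sum_(i < n) x i ^+ 2.
Proof.
move=> Sx; have : 0 <= \sum_(i < n) (x i - 1) ^+ 2.
  by apply: sumr_ge0 => i _; exact: sqr_ge0.
under eq_bigr do rewrite sqrrB1.
rewrite big_split sumrB /= sumr_const card_ord sumrMnl Sx; lra.
Qed.

Lemma sum_quadratic x (c2 c1 c0 : R) :
  \sum_(i < n) (c2 * x i ^+ 2 + c1 * x i + c0)
  = c2 * \sum_(i < n) x i ^+ 2 + c1 * \sum_(i < n) x i + c0 * n%:R.
Proof. by rewrite !big_split /= sumr_const card_ord -!mulr_sumr mulr_natr. Qed.

Lemma sum_mix_sqr (a : R) x i :
  \sum_(l < n) ((1 - a) * x i + a * x l) ^+ 2 =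
  n%:R * ((1 - a) * x i) ^+ 2 + 2 * (1 - a) * a * x i * \sum_(l < n) x l
  + a ^+ 2 * \sum_(l < n) x l ^+ 2.
Proof.
rewrite (eq_bigr (fun l => a ^+ 2 * x l ^+ 2 + 2 * (1 - a) * a * x i * x l
                           + ((1 - a) * x i) ^+ 2)) => [|l _]; last by ring.
by rewrite sum_quadratic; ring.
Qed.

Definition replace_weight x i : R :=
  \sum_(l < n | l != i) replace_est x l i ^+ 2 - n%:R * x i ^+ 2.

Lemma total_cost_replace phi psi x l :
  total_cost (replace_coef phi psi l) (replace_est x l)
  = psi l + \sum_(i < n | i != l) phi i * replace_est x l i ^+ 2.
Proof.
rewrite /total_cost (bigD1 l) //= {1 2}/replace_coef {1}/replace_est eqxx expr1n mulr1.
by congr (_ + _); apply: eq_bigr => i /negPf; rewrite /replace_coef => ->.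
Qed.

Lemma expected_delta_replaceE phi psi x :
  expected_delta_replace phi psi x
  = n%:R^-1 * (\sum_(l < n) psi l + \sum_(i < n) phi i * replace_weight x i).
Proof.
rewrite /expected_delta_replace; congr (_ * _).
under eq_bigr do rewrite total_cost_replace.
rewrite sumrB big_split /= -addrA; congr (_ + _).
rewrite (exchange_big_dep xpredT) //= sumr_const card_ord /total_cost -sumrMnl -sumrB.
apply: eq_bigr => i _; rewrite /replace_weight mulrBr -mulr_sumr mulr_natl mulrnAr.
by under eq_bigl do rewrite eq_sym.
Qed.

Definition replace_weight_bound x i : R :=
  n%:R^-1 ^+ 2 * (\sum_(l < n) x l ^+ 2 - x i ^+ 2)
  + 2 * (1 - n%:R^-1) * x i * (1 - n%:R^-1 * x i).

Lemma replace_weightE x i : \sum_(l < n) x l = n%:R ->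
  replace_weight x i
  = replace_weight_bound x i - (3 - 3 * n%:R^-1 + n%:R^-1 ^+ 2) * x i ^+ 2.
Proof.
move=> Sx; have N_neq0 : n%:R != 0 :> R.
  by rewrite pnatr_eq0 -lt0n (leq_trans _ (ltn_ord i)).
have := sum_mix_sqr n%:R^-1 x i; rewrite (bigD1 i) //= Sx => mix_sum.
rewrite /replace_weight.
under eq_bigr => l ne_li do rewrite /replace_est eq_sym (negPf ne_li).
rewrite -[X in X - _](addKr (((1 - n%:R^-1) * x i + n%:R^-1 * x i) ^+ 2)) mix_sum.
by rewrite /replace_weight_bound; field.
Qed.

Lemma replace_weight_bound_ge0 x i : in_simplex x -> 0 <= replace_weight_bound x i.
Proof.
move=> [x_ge0 Sx]; have N_gt0 : 0 < n%:R :> R by rewrite ltr0n (leq_trans _ (ltn_ord i)).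
have xi_le_N : x i <= n%:R.
  by rewrite -Sx (bigD1 i) //= lerDl sumr_ge0.
have xi2_le : x i ^+ 2 <= \sum_(l < n) x l ^+ 2.
  by rewrite (bigD1 i) //= lerDl sumr_ge0 // => l _; apply: sqr_ge0.
have invN_le1 : n%:R^-1 <= 1 :> R by rewrite invf_le1 // ler1n (leq_trans _ (ltn_ord i)).
have scaled_le1 : n%:R^-1 * x i <= 1 by rewrite mulrC ler_pdivrMr // mul1r.
by rewrite /replace_weight_bound addr_ge0 ?mulr_ge0 ?subr_ge0 ?invr_ge0 ?exprn_ge0.
Qed.

Lemma sum_replace_weight_bound x : (0 < n)%N -> \sum_(i < n) x i = n%:R ->
  \sum_(i < n) replace_weight_bound x i
  = (1 - n%:R^-1) * (2 * n%:R - n%:R^-1 * \sum_(i < n) x i ^+ 2).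
Proof.
move=> n_gt0 Sx; have N_neq0 : n%:R != 0 :> R by rewrite pnatr_eq0 -lt0n.
pose a : R := n%:R^-1; pose Q := \sum_(l < n) x l ^+ 2.
rewrite (eq_bigr (fun i => (- a ^+ 2 - 2 * (1 - a) * a) * x i ^+ 2 + 2 * (1 - a) * x i
                           + a ^+ 2 * Q)) => [|i _].
  by rewrite sum_quadratic Sx /a /Q; field.
by rewrite /replace_weight_bound /a /Q; field.
Qed.

End Replacement.

Lemma replace_bound_le (R : realFieldType) (a N Q alpha beta : R) :
  0 < alpha <= beta -> 0 < a <= 1 -> a * N = 1 -> N <= Q ->
  a * (N * (beta / 2) + beta / 2 * ((1 - a) * (2 * N - a * Q))
       - alpha / 2 * ((3 - 3 * a + a ^+ 2) * Q))
  <= (beta - alpha) / 2 * (3 - 3 * a + a ^+ 2).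
Proof.
move=> /andP[alpha_gt0 le_ab] /andP[a_gt0 a_le1] aN le_NQ.
have slope_ge0 : 0 <= a ^+ 2 * beta * (1 - a) + a * alpha * (3 - 3 * a + a ^+ 2).
  by apply: addr_ge0; apply: mulr_ge0; nra.
rewrite -subr_ge0; set e := (X in 0 <= X).
have -> : e = (Q - N) * (a ^+ 2 * beta * (1 - a) + a * alpha * (3 - 3 * a + a ^+ 2)) / 2
              - (a * N - 1) * ((beta - alpha) / 2 * (3 - 3 * a + a ^+ 2)).
  by rewrite /e; ring.
by rewrite aN subrr mul0r subr0 divr_ge0 ?mulr_ge0 ?subr_ge0.
Qed.

Theorem proposition3 (R : realFieldType) (n : nat) (alpha beta : R)
  (phi psi x : 'I_n -> R) :
  (0 < n)%N -> 0 < alpha -> alpha <= beta ->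
  (forall i, alpha / 2 <= phi i <= beta / 2) ->
  (forall l, alpha / 2 <= psi l <= beta / 2) ->
  in_simplex x ->
  expected_delta_replace phi psi x
    <= (3 * n%:R ^+ 2 - 3 * n%:R + 1) / (2 * n%:R ^+ 2) * (beta - alpha).
Proof.
move=> n_gt0 alpha_gt0 le_ab phi_b psi_b x_simplex; have [_ Sx] := x_simplex.
have N_gt0 : 0 < n%:R :> R by rewrite ltr0n.
pose a : R := n%:R^-1; pose c := 3 - 3 * a + a ^+ 2.
have a_gt0 : 0 < a by rewrite invr_gt0.
have a_le1 : a <= 1 by rewrite invf_le1 // ler1n.
have phi_weight_le i : phi i * replace_weight x i
    <= beta / 2 * replace_weight_bound x i - alpha / 2 * (c * x i ^+ 2).
  rewrite replace_weightE // mulrB_le_bounds // ?replace_weight_bound_ge0 //.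
  by apply: mulr_ge0 (sqr_ge0 _); rewrite -/a; nra.
have psi_sum_le : \sum_(l < n) psi l <= n%:R * (beta / 2).
  have -> : n%:R * (beta / 2) = \sum_(l < n) beta / 2.
    by rewrite sumr_const card_ord mulr_natl.
  by apply: ler_sum => l _; case/andP: (psi_b l).
pose Q := \sum_(i < n) x i ^+ 2.
have -> : (3 * n%:R ^+ 2 - 3 * n%:R + 1) / (2 * n%:R ^+ 2) * (beta - alpha)
          = (beta - alpha) / 2 * c by rewrite /c /a; field; rewrite gt_eqF.
apply: le_trans (replace_bound_le (a := a) (N := n%:R) (Q := Q) _ _ _ _).
- rewrite expected_delta_replaceE -/a ler_pM2l // -addrA lerD //.
  apply: le_trans (ler_sum _ (fun i _ => phi_weight_le i)) _.
  by rewrite sumrB -!mulr_sumr sum_replace_weight_bound // -/a -/Q.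
- by rewrite alpha_gt0.
- by rewrite a_gt0.
- by rewrite mulVf // gt_eqF.
- exact: sum_sqr_ge_card.
Qed.
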